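(* Let $\Sigma\subseteq\mathcal L_\Diamond$ be finite and closed under subformulas and let $\mathcal I$ be a finite weak $\Sigma$-quasimodel such that for every deterministic weak $\mathcal L_\Diamond$-quasimodel $\mathcal A$ the relation $\rightharpoonup\ \subseteq|\mathcal I|\times|\mathcal A|$ is a surjective dynamic simulation. Let $P=\{w\in|\mathcal I|:\not\vdash\mathrm{Sim}(w)\}$. Then the restriction $\mathcal I\upharpoonright P=(P,\preccurlyeq_{\mathcal I}\cap(P\times P),S_{\mathcal I}\cap(P\times P),\ell_{\mathcal I}\upharpoonright P)$ is a (finite) $\Sigma$-quasimodel.
   Context: $\mathcal L_\Diamond$ is the propositional language with $\bot,\wedge,\vee,\to$ and unary modalities $\bigcirc$, $\Diamond$. ${\sf ITL}^0_\Diamond$ is axiomatized by all intuitionistic propositional tautologies, $\neg\bigcirc\bot$, $\bigcirc\varphi\wedge\bigcirc\psi\to\bigcirc(\varphi\wedge\psi)$, $\bigcirc(\varphi\vee\psi)\to\bigcirc\varphi\vee\bigcirc\psi$, $\bigcirc(\varphi\to\psi)\to(\bigcirc\varphi\to\bigcirc\psi)$, $\varphi\vee\bigcirc\Diamond\varphi\to\Diamond\varphi$, closed under modus ponens and the rules $\varphi/\bigcirc\varphi$, $(\varphi\to\psi)/(\Diamond\varphi\to\Diamond\psi)$, $(\bigcirc\varphi\to\varphi)/(\Diamond\varphi\to\varphi)$; $\vdash\varphi$ means $\varphi\in{\sf ITL}^0_\Diamond$. Types: a $\Sigma$-type is a pair $\Phi=(\Phi^-;\Phi^+)$ of subsets of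 $\Sigma$ with $\Phi^-\cap\Phi^+=\varnothing$, $\Phi^-\cup\Phi^+=\Sigma$, $\bot\notin\Phi^+$, $\wedge,\vee$ in $\Phi^+$ behaving classically, ($\varphi\to\psi\in\Phi^+\Rightarrow\varphi\in\Phi^-$ or $\psi\in\Phi^+$), ($\Diamond\varphi\in\Phi^-\Rightarrow\varphi\in\Phi^-$). $\Phi\preccurlyeq_T\Psi$ iff $\Phi^+\subseteq\Psi^+$; $\Phi\subseteq_T\Psi$ iff $\Phi^-\subseteq\Psi^-$, $\Phi^+\subseteq\Psi^+$. $\Phi\,S_T\,\Psi$ iff: $\bigcirc\varphi\in\Phi^+\Rightarrow\varphi\in\Psi^+$; $\bigcirc\varphi\in\Phi^-\Rightarrow\varphi\in\Psi^-$; ($\Diamond\varphi\in\Phi^+$, $\varphi\in\Phi^-$)$\Rightarrow\Diamond\varphi\in\Psi^+$; $\Diamond\varphi\in\Phi^-\Rightarrow\Diamond\varphi\in\Psi^-$. A $\Sigma$-labelled frame is $(W,\preccurlyeq,\ell)$, $\preccurlyeq$ a partial order, $\ell$ mapping to $\Sigma$-types, monotone w.r.t. $\preccurlyeq_T$, and if $\varphi\to\psi\in\ell^-(w)$ then some $v\succcurlyeq w$ has $\varphi\in\ell^+(v)$, $\psi\in\ell^-(v)$. A weak $\Sigma$-quasimodel adds $S\subseteq W\times W$ forward-confluent (if $w\preccurlyeq w'$, $w\,S\,v$ then some $v'\succcurlyeq v$ has $w'\,S\,v'$) and sensible ($w\,S\,v\Rightarrow\ell(w)\,S_T\,\ell(v)$);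 deterministic if $S$ is a function. A $\Sigma$-quasimodel is a weak $\Sigma$-quasimodel whose $S$ is also serial and $\omega$-sensible (if $\Diamond\varphi\in\ell^+(w)$ there are $n\ge0$ and $v$ with $w\,S^n\,v$ and $\varphi\in\ell^+(v)$). A simulation from a $\Sigma$-labelled $\mathcal X$ to a $\Delta$-labelled $\mathcal Y$ ($\Sigma\subseteq\Delta$) is a forward-confluent $E\subseteq|\mathcal X|\times|\mathcal Y|$ with $x\,E\,y\Rightarrow\ell(x)\subseteq_T\ell(y)$; $x\rightharpoonup y$ iff some simulation relates them; $E$ is dynamic if $x\,E\,y$ and $y\,S\,y'$ imply some $x'$ with $x\,S\,x'$, $x'\,E\,y'$; surjective if every point of $\mathcal A$ is in its range. $\mathrm{Sim}(w)=\bigwedge\ell^+(w)\to\big(\bigvee\ell^-(w)\vee\bigvee_{v\succ w}\mathrm{Sim}(v)\big)$, defined by backwards induction on $\prec$ ($\bigwedge\varnothing=\top$, $\bigvee\varnothing=\bot$). *)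

From HB Require Import structures.
From mathcomp Require Import all_boot.
Set Implicit Arguments. Unset Strict Implicit. Unset Printing Implicit Defensive.

Inductive form : Type :=
| Var  : nat -> form
| Bot  : form
| And  : form -> form -> form
| Or   : form -> form -> form
| Imp  : form -> form -> form
| Next : form -> form
| Dia  : form -> form.

Definition Neg (f : form) : form := Imp f Bot.
Definition Top : form := Imp Bot Bot.

Definition form_eq_dec : forall x y : form, {x = y} + {x <> y}.
Proof. decide equality; decide equality. Defined.

HB.instance Definition _ := comparableMixin form_eq_dec.

Definition children (f : form) : seq form :=
  match f with
  | Var _ | Bot => [::]
  | And a b | Or a b | Imp a b => [:: a; b]
  | Next a | Dia a => [:: a]
  end.

(* closure under subformulas (equivalently, under immediate subformulas) *)
Definition subformula_closed (Sig : seq form) : Prop :=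
  forall f, f \in Sig -> forall g, g \in children f -> g \in Sig.

(* Intuitionistic propositional tautologies (all substitution instances, in
   the full language) are generated by a standard complete Hilbert
   axiomatisation of IPC (schemes + modus ponens). *)
Inductive prov : form -> Prop :=
| ax_K     a b   : prov (Imp a (Imp b a))
| ax_S     a b c : prov (Imp (Imp a (Imp b c)) (Imp (Imp a b) (Imp a c)))
| ax_andE1 a b   : prov (Imp (And a b) a)
| ax_andE2 a b   : prov (Imp (And a b) b)
| ax_andI  a b   : prov (Imp a (Imp b (And a b)))
| ax_orI1  a b   : prov (Imp a (Or a b))
| ax_orI2  a b   : prov (Imp b (Or a b))
| ax_orE   a b c : prov (Imp (Imp a c) (Imp (Imp b c) (Imp (Or a b) c)))
| ax_efq   a     : prov (Imp Bot a)
| ax_nextBot     : prov (Neg (Next Bot))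
| ax_nextAnd a b : prov (Imp (And (Next a) (Next b)) (Next (And a b)))
| ax_nextOr  a b : prov (Imp (Next (Or a b)) (Or (Next a) (Next b)))
| ax_nextK   a b : prov (Imp (Next (Imp a b)) (Imp (Next a) (Next b)))
| ax_diaFix  a   : prov (Imp (Or a (Next (Dia a))) (Dia a))
| r_mp   a b : prov (Imp a b) -> prov a -> prov b
| r_nec  a   : prov a -> prov (Next a)
| r_diaMon a b : prov (Imp a b) -> prov (Imp (Dia a) (Dia b))
| r_diaInd a : prov (Imp (Next a) a) -> prov (Imp (Dia a) a).

Record ty := Ty { tminus : pred form; tplus : pred form }.

(* Sig : the (possibly infinite) set of formulas the types range over *)
Definition is_type (Sig : pred form) (T : ty) : Prop :=
  (forall f, ~ (tminus T f /\ tplus T f)) /\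
      (forall f, Sig f <-> (tminus T f \/ tplus T f)) /\
      ~ tplus T Bot /\
      (forall a b, Sig (And a b) -> (tplus T (And a b) <-> (tplus T a /\ tplus T b))) /\
      (forall a b, Sig (Or a b) -> (tplus T (Or a b) <-> (tplus T a \/ tplus T b))) /\
      (forall a b, tplus T (Imp a b) -> tminus T a \/ tplus T b)  /\
      (forall a, tminus T (Dia a) -> tminus T a).

Definition ty_le (T U : ty) : Prop := forall f, tplus T f -> tplus U f.

Definition ty_sub (T U : ty) : Prop :=
  (forall f, tminus T f -> tminus U f) /\ (forall f, tplus T f -> tplus U f).

Definition ty_S (T U : ty) : Prop :=
  [/\ (forall a, tplus T (Next a) -> tplus U a),
      (forall a, tminus T (Next a) -> tminus U a),
      (forall a, tplus T (Dia a) -> tminus T a -> tplus U (Dia a))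
    & (forall a, tminus T (Dia a) -> tminus U (Dia a))].

Definition partial_order (W : Type) (le : W -> W -> Prop) : Prop :=
  [/\ (forall w, le w w),
      (forall u v w, le u v -> le v w -> le u w)
    & (forall u v, le u v -> le v u -> u = v)].

Definition labelled_frame (Sig : pred form) (W : Type)
    (le : W -> W -> Prop) (l : W -> ty) : Prop :=
  [/\ partial_order le,
      (forall w, is_type Sig (l w)),
      (forall w v, le w v -> ty_le (l w) (l v))
    & (forall w a b, tminus (l w) (Imp a b) ->
         exists v, le w v /\ tplus (l v) a /\ tminus (l v) b)].

Definition forward_confluent (W : Type) (le S : W -> W -> Prop) : Prop :=
  forall w w' v, le w w' -> S w v -> exists v', le v v' /\ S w' v'.

Definition sensible (W : Type) (S : W -> W -> Prop) (l : W -> ty) : Prop :=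
  forall w v, S w v -> ty_S (l w) (l v).

Definition weak_quasimodel (Sig : pred form) (W : Type)
    (le S : W -> W -> Prop) (l : W -> ty) : Prop :=
  [/\ labelled_frame Sig le l, forward_confluent le S & sensible S l].

Definition deterministic (W : Type) (S : W -> W -> Prop) : Prop :=
  forall w, exists! v, S w v.

Definition serial (W : Type) (S : W -> W -> Prop) : Prop :=
  forall w, exists v, S w v.

Fixpoint iterS (W : Type) (S : W -> W -> Prop) (n : nat) (w v : W) : Prop :=
  match n with
  | 0 => w = v
  | n'.+1 => exists u, S w u /\ iterS S n' u v
  end.

Definition omega_sensible (W : Type) (S : W -> W -> Prop) (l : W -> ty) : Prop :=
  forall w a, tplus (l w) (Dia a) ->
    exists n v, iterS S n w v /\ tplus (l v) a.

Definition quasimodel (Sig : pred form) (W : Type)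
    (le S : W -> W -> Prop) (l : W -> ty) : Prop :=
  [/\ weak_quasimodel Sig le S l, serial S & omega_sensible S l].

Definition simulation (X Y : Type) (leX : X -> X -> Prop) (lX : X -> ty)
    (leY : Y -> Y -> Prop) (lY : Y -> ty) (E : X -> Y -> Prop) : Prop :=
  (forall x y, E x y -> ty_sub (lX x) (lY y)) /\
  (forall x x' y, E x y -> leX x x' -> exists y', leY y y' /\ E x' y').

Definition simulates (X Y : Type) (leX : X -> X -> Prop) (lX : X -> ty)
    (leY : Y -> Y -> Prop) (lY : Y -> ty) (x : X) (y : Y) : Prop :=
  exists E, simulation leX lX leY lY E /\ E x y.

Definition dynamic (X Y : Type) (SX : X -> X -> Prop) (SY : Y -> Y -> Prop)
    (E : X -> Y -> Prop) : Prop :=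
  forall x y y', E x y -> SY y y' -> exists x', SX x x' /\ E x' y'.

Definition surjective_rel (X Y : Type) (E : X -> Y -> Prop) : Prop :=
  forall y, exists x, E x y.

Fixpoint bigAnd (s : seq form) : form :=
  match s with
  | [::] => Top
  | [:: a] => a
  | a :: s' => And a (bigAnd s')
  end.

Fixpoint bigOr (s : seq form) : form :=
  match s with
  | [::] => Bot
  | [:: a] => a
  | a :: s' => Or a (bigOr s')
  end.

(* Sim with fuel; the fuel #|W| always suffices (strict chains in a finite
   partial order have fewer than #|W| steps), so the base case is never reached
   and sim_formula below is literally the backward-inductive definition. *)
Fixpoint simf (Sig : seq form) (W : finType) (le : rel W) (l : W -> ty)
    (n : nat) (w : W) : form :=
  match n with
  | 0 => Bot
  | n'.+1 =>
      Imp (bigAnd [seq f <- Sig | tplus (l w) f])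
          (Or (bigOr [seq f <- Sig | tminus (l w) f])
              (bigOr [seq simf Sig le l n' v | v <- enum [pred v | (v != w) && le w v]]))
  end.

Definition sim_formula (Sig : seq form) (W : finType) (le : rel W) (l : W -> ty)
    (w : W) : form := simf Sig le l #|W| w.

From Pilot Require Import Defs.
From HB Require Import structures.
From mathcomp Require Import all_boot.
From mathcomp Require Import boolp.
Set Implicit Arguments. Unset Strict Implicit. Unset Printing Implicit Defensive.

(* The points u of I with an unprovable Sim(u) are exactly those simulated
   by a point of the canonical model of ITL^0_Diamond, whose points are the
   prime theories and whose successor map is t |-> {f | Next f \in t}.  By
   hypothesis the simulation into this deterministic weak quasimodel is
   dynamic, so P is upward closed and every point of P has an S-successor in
   P.  For omega-sensibility let chi be the conjunction of Sim(u) over the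
   points u from which no S-path inside P reaches a point labelled with a.
   Any theory refuting Sim(u) extends to a theory simulated by u, whence
   a -> chi and (Next chi) -> chi are provable; the induction rule gives
   (Dia a) -> chi.  A theory simulated by w contains Dia a but refutes
   Sim(w), so w is not among those points: some S-path in P reaches a. *)

Fixpoint tree_of_form (f : form) : GenTree.tree nat :=
  match f with
  | Var n => GenTree.Leaf n
  | Bot => GenTree.Node 0 [::]
  | And a b => GenTree.Node 1 [:: tree_of_form a; tree_of_form b]
  | Or a b => GenTree.Node 2 [:: tree_of_form a; tree_of_form b]
  | Imp a b => GenTree.Node 3 [:: tree_of_form a; tree_of_form b]
  | Next a => GenTree.Node 4 [:: tree_of_form a]
  | Dia a => GenTree.Node 5 [:: tree_of_form a]
  end.

Fixpoint form_of_tree (t : GenTree.tree nat) : option form :=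
  let bin op a b :=
    if (form_of_tree a, form_of_tree b) is (Some x, Some y) then Some (op x y) else None in
  let un op a := omap op (form_of_tree a) in
  match t with
  | GenTree.Leaf n => Some (Var n)
  | GenTree.Node 0 [::] => Some Bot
  | GenTree.Node 1 [:: a; b] => bin And a b
  | GenTree.Node 2 [:: a; b] => bin Or a b
  | GenTree.Node 3 [:: a; b] => bin Imp a b
  | GenTree.Node 4 [:: a] => un Next a
  | GenTree.Node 5 [:: a] => un Dia a
  | _ => None
  end.

Lemma tree_of_formK : pcancel tree_of_form form_of_tree.
Proof. by elim=> //= [a -> b ->|a -> b ->|a -> b ->|a ->|a ->]. Qed.

HB.instance Definition _ := PCanIsCountable tree_of_formK.

Definition form_nth (n : nat) : form := odflt Bot (unpickle n).

Lemma form_nthK : cancel pickle form_nth.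
Proof. by move=> f; rewrite /form_nth pickleK. Qed.

Inductive entails (G : form -> Prop) : form -> Prop :=
| entails_hyp f : G f -> entails G f
| entails_prov f : prov f -> entails G f
| entails_mp a b : entails G (Imp a b) -> entails G a -> entails G b.

Lemma prov_imp_refl a : prov (Imp a a).
Proof.
exact: r_mp (r_mp (ax_S a (Imp a a) a) (ax_K a (Imp a a))) (ax_K a a).
Qed.

Lemma entails_sub (G G' : form -> Prop) f :
  (forall x, G x -> G' x) -> entails G f -> entails G' f.
Proof.
move=> sGG'; elim=> [x /sGG'|x|a b _ IHab _ IHa].
- exact: entails_hyp.
- exact: entails_prov.
- exact: entails_mp IHab IHa.
Qed.

Lemma entails_deduction (G : form -> Prop) a b :
  entails (fun x => G x \/ x = a) b -> entails G (Imp a b).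
Proof.
elim=> [x [Gx| ->]|x px|x y _ IHxy _ IHx].
- exact: entails_mp (entails_prov _ (ax_K x a)) (entails_hyp Gx).
- exact: entails_prov (prov_imp_refl a).
- exact: entails_mp (entails_prov _ (ax_K x a)) (entails_prov _ px).
- exact: entails_mp (entails_mp (entails_prov _ (ax_S a x y)) IHxy) IHx.
Qed.

Lemma entails_prov0 f : entails (fun _ => False) f -> prov f.
Proof. by elim=> // a b _ pab _ pa; apply: r_mp pab pa. Qed.

(** * Prime theories and the Lindenbaum lemma *)

Record prime_theory (t : pred form) : Prop := PrimeTheory {
  theory_closed : forall f, entails (fun x => t x) f -> t f;
  theory_consistent : ~~ t Bot;
  theory_prime : forall a b, t (Or a b) -> t a \/ t b }.

Section Lindenbaum.
Variables (G : form -> Prop) (phi : form).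

Fixpoint lindenbaum_chain (n : nat) : form -> Prop :=
  match n with
  | 0 => G
  | n.+1 => fun x => lindenbaum_chain n x \/
      (x = form_nth n /\
       ~ entails (fun y => lindenbaum_chain n y \/ y = form_nth n) phi)
  end.

Definition lindenbaum_limit (x : form) : Prop := exists n, lindenbaum_chain n x.

Lemma lindenbaum_chain_mono m n x :
  m <= n -> lindenbaum_chain m x -> lindenbaum_chain n x.
Proof.
by move=> /subnK <-; elim: (n - m) => // k IHk /IHk; rewrite addSn; left.
Qed.

Lemma lindenbaum_limit_compact f :
  entails lindenbaum_limit f -> exists n, entails (lindenbaum_chain n) f.
Proof.
elim=> [x [n xn]|x px|a b _ [n1 Hab] _ [n2 Ha]].
- by exists n; apply: entails_hyp.
- by exists 0; apply: entails_prov.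
- exists (maxn n1 n2); apply: entails_mp.
  + by apply: entails_sub Hab => x; apply: lindenbaum_chain_mono; apply: leq_maxl.
  + by apply: entails_sub Ha => x; apply: lindenbaum_chain_mono; apply: leq_maxr.
Qed.

Hypothesis G_phi : ~ entails G phi.

Lemma lindenbaum_chain_consistent n : ~ entails (lindenbaum_chain n) phi.
Proof.
elim: n => //= n IHn.
have [ext_phi|ext_nphi] := pselect
  (entails (fun y => lindenbaum_chain n y \/ y = form_nth n) phi).
- by apply: contra_not IHn; apply: entails_sub => x [|[]].
- by apply: contra_not ext_nphi; apply: entails_sub => x [|[-> _]]; [left|right].
Qed.

Lemma lindenbaum_limit_consistent : ~ entails lindenbaum_limit phi.
Proof. by move=> /lindenbaum_limit_compact [n]; apply: lindenbaum_chain_consistent. Qed.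

Lemma lindenbaum_limit_decides x :
  lindenbaum_limit x \/ entails lindenbaum_limit (Imp x phi).
Proof.
have [ext_phi|ext_nphi] := pselect
  (entails (fun y => lindenbaum_chain (pickle x) y \/ y = form_nth (pickle x)) phi).
- right; apply: entails_deduction; move: ext_phi; rewrite form_nthK.
  by apply: entails_sub => y [yn|->]; [left; exists (pickle x)|right].
- by left; exists (pickle x).+1; rewrite /=; right; split=> //; rewrite form_nthK.
Qed.

Lemma lindenbaum_limit_closed f : entails lindenbaum_limit f -> lindenbaum_limit f.
Proof.
move=> Hf; case: (lindenbaum_limit_decides f) => // Hfphi.
by case: lindenbaum_limit_consistent; apply: entails_mp Hfphi Hf.
Qed.

Lemma lindenbaum_limit_prime a b :
  lindenbaum_limit (Or a b) -> lindenbaum_limit a \/ lindenbaum_limit b.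
Proof.
move=> Hab; case: (lindenbaum_limit_decides a) => [|Ha]; first by left.
case: (lindenbaum_limit_decides b) => [|Hb]; first by right.
case: lindenbaum_limit_consistent.
exact: entails_mp (entails_mp (entails_mp (entails_prov _ (ax_orE a b phi)) Ha) Hb)
         (entails_hyp Hab).
Qed.

Lemma lindenbaum : exists t, [/\ prime_theory t, (forall x, G x -> t x) & ~~ t phi].
Proof.
exists (fun x => `[< lindenbaum_limit x >]); split.
- split.
  + move=> f Hf; apply/asboolP/lindenbaum_limit_closed.
    by apply: entails_sub Hf => x /asboolP.
  + apply/asboolP => limBot; case: lindenbaum_limit_consistent.
    exact: entails_mp (entails_prov _ (ax_efq phi)) (entails_hyp limBot).
  + move=> a b /asboolP /lindenbaum_limit_prime [] Hx; [left|right]; exact/asboolP.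
- by move=> x Gx; apply/asboolP; exists 0.
- by apply/asboolP => limphi; apply: lindenbaum_limit_consistent; apply: entails_hyp.
Qed.

End Lindenbaum.

Section PrimeTheoryFacts.
Variables (t : pred form) (pt : prime_theory t).

Lemma theory_prov f : prov f -> t f.
Proof. by move=> pf; apply: (theory_closed pt); apply: entails_prov. Qed.

Lemma theory_mp a b : t (Imp a b) -> t a -> t b.
Proof.
by move=> tab ta; apply: (theory_closed pt); apply: entails_mp (entails_hyp tab) (entails_hyp ta).
Qed.

Lemma theory_prov_imp a b : prov (Imp a b) -> t a -> t b.
Proof. by move=> /theory_prov; apply: theory_mp. Qed.

Lemma theory_orP a b : t (Or a b) <-> t a \/ t b.
Proof.
split; first exact: theory_prime.
by case; [apply: theory_prov_imp (ax_orI1 a b)|apply: theory_prov_imp (ax_orI2 a b)].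
Qed.

Lemma theory_andP a b : t (And a b) <-> t a /\ t b.
Proof.
split=> [tab|[ta tb]].
  by split; [apply: theory_prov_imp (ax_andE1 a b) tab|apply: theory_prov_imp (ax_andE2 a b) tab].
exact: theory_mp (theory_prov_imp (ax_andI a b) ta) tb.
Qed.

Lemma theory_bigAndP s : t (bigAnd s) <-> (forall x, x \in s -> t x).
Proof.
elim: s => [|a [|b s] IHs].
- by split=> // _; apply: theory_prov (ax_efq Bot).
- by split=> [ta x|]; [rewrite inE => /eqP ->|apply; rewrite inE].
- rewrite [bigAnd _]/= theory_andP IHs; split=> [[ta ts] x|H].
  + by rewrite inE => /orP [/eqP ->|/ts].
  + by split=> [|x xs]; apply: H; rewrite inE ?eqxx ?xs ?orbT.
Qed.

Lemma theory_bigOrP s : t (bigOr s) <-> (exists2 x, x \in s & t x).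
Proof.
elim: s => [|a [|b s] IHs].
- by split=> [tBot|[]//]; move: (theory_consistent pt); rewrite tBot.
- by split=> [ta|[x]]; [exists a; rewrite ?inE|rewrite inE => /eqP ->].
- rewrite [bigOr _]/= theory_orP IHs; split=> [[ta|[x xs tx]]|[x]].
  + by exists a; rewrite ?inE ?eqxx.
  + by exists x; rewrite // inE xs orbT.
  + by rewrite inE => /orP [/eqP ->|xs tx]; [left|right; exists x].
Qed.

Lemma theory_extend_imp a b : ~~ t (Imp a b) ->
  exists t', [/\ prime_theory t', (forall x, t x -> t' x), t' a & ~~ t' b].
Proof.
move=> tNab; have tab_b : ~ entails (fun x => t x \/ x = a) b.
  by move=> /entails_deduction /(theory_closed pt) tab; rewrite tab in tNab.
have [t' [pt' sub t'b]] := lindenbaum tab_b.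
by exists t'; split=> // [x tx|]; apply: sub; [left|right].
Qed.

End PrimeTheoryFacts.

Lemma prov_complete f : (forall t, prime_theory t -> t f) -> prov f.
Proof.
move=> Hf; apply: contrapT => nf.
have [|t [pt _]] := @lindenbaum (fun _ => False) f; first by move/entails_prov0.
by rewrite Hf.
Qed.

Lemma prov_imp_complete a b :
  (forall t, prime_theory t -> t a -> t b) -> prov (Imp a b).
Proof.
move=> Hab; apply: prov_complete => t pt; apply: contrapT => /negP tNab.
have [t' [pt' _ t'a]] := theory_extend_imp pt tNab.
by rewrite Hab.
Qed.

Lemma prov_dia_intro a : prov (Imp a (Dia a)).
Proof.
apply: prov_imp_complete => t pt ta; apply: (theory_prov_imp pt (ax_diaFix a)).
by apply/(theory_orP pt); left.
Qed.

Lemma prov_next_dia a : prov (Imp (Next (Dia a)) (Dia a)).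
Proof.
apply: prov_imp_complete => t pt ta; apply: (theory_prov_imp pt (ax_diaFix a)).
by apply/(theory_orP pt); right.
Qed.

Lemma theory_next_mono t a b : prime_theory t -> prov (Imp a b) -> t (Next a) -> t (Next b).
Proof.
move=> pt pab tNa; apply: (theory_mp pt _ tNa).
exact: (theory_prov_imp pt (ax_nextK a b) (theory_prov pt (r_nec pab))).
Qed.

(* The induction rule applied to  a \/ Next (Dia a),  which is closed under Next. *)
Lemma prov_dia_unfold a : prov (Imp (Dia a) (Or a (Next (Dia a)))).
Proof.
set unf := Or a (Next (Dia a)).
have unf_ind : prov (Imp (Next unf) unf).
  apply: prov_imp_complete => t pt tNunf; apply/(theory_orP pt); right.
  have /(theory_orP pt) [tNa|tNNDa] := theory_prov_imp pt (ax_nextOr _ _) tNunf.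
  - exact: theory_next_mono pt (prov_dia_intro a) tNa.
  - exact: theory_next_mono pt (prov_next_dia a) tNNDa.
apply: prov_imp_complete => t pt tDa; apply: (theory_prov_imp pt (r_diaInd unf_ind)).
by apply: (theory_prov_imp pt (r_diaMon (ax_orI1 a (Next (Dia a))))).
Qed.

(** * The canonical model *)

Definition ptheory := {t : pred form | prime_theory t}.

Definition canon_le (x y : ptheory) : Prop := forall f, sval x f -> sval y f.

Definition canon_label (x : ptheory) : ty := Ty (fun f => ~~ sval x f) (sval x).

Lemma ptheory_ext (x y : ptheory) : sval x =1 sval y -> x = y.
Proof. by case: x y => [t pt] [t' pt'] /= /funext tt'; apply: eq_exist. Qed.

Lemma prime_theory_next t : prime_theory t -> prime_theory (fun f => t (Next f)).
Proof.
move=> pt; split.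
- move=> f; elim=> [x //|x px|a b _ tNab _ tNa].
  + exact: (theory_prov pt (r_nec px)).
  + exact: (theory_mp pt (theory_prov_imp pt (ax_nextK _ _) tNab) tNa).
- apply/negP => tNBot; move: (theory_consistent pt).
  by rewrite (theory_prov_imp pt ax_nextBot tNBot).
- by move=> a b /(theory_prov_imp pt (ax_nextOr _ _)) /(theory_orP pt).
Qed.

Definition canon_next (x : ptheory) : ptheory :=
  exist _ _ (prime_theory_next (svalP x)).

Definition canon_S (x y : ptheory) : Prop := y = canon_next x.

Lemma canon_deterministic : deterministic canon_S.
Proof. by move=> x; exists (canon_next x); split=> // y ->. Qed.

Lemma canon_type (x : ptheory) : is_type (fun _ => true) (canon_label x).
Proof.
case: x => t pt; rewrite /is_type /=.
split; last split; last split; last split; last split; last split.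
- by move=> f [/negP].
- by move=> f; split=> // _; case: (t f); [right|left].
- exact/negP/theory_consistent.
- by move=> a b _; apply: theory_andP.
- by move=> a b _; apply: theory_orP.
- by move=> a b tab; case ta: (t a); [right; apply: (theory_mp pt tab ta)|left].
- by move=> a; apply: contra; apply: (theory_prov_imp pt (prov_dia_intro a)).
Qed.

Lemma canon_weak_quasimodel :
  weak_quasimodel (fun _ => true) canon_le canon_S canon_label.
Proof.
split.
- split=> //.
  + split=> [x f //|x y z lxy lyz f /lxy /lyz //|x y lxy lyx].
    by apply: ptheory_ext => f; apply/idP/idP; [apply: lxy|apply: lyx].
  + exact: canon_type.
  + move=> [t pt] a b /= tNab; have [t' [pt' tt' t'a t'Nb]] := theory_extend_imp pt tNab.
    by exists (exist _ t' pt').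
- by move=> x x' y lxx' ->; exists (canon_next x'); split=> // f; apply: lxx'.
- move=> [t pt] y -> /=; split=> //= a.
  + move=> tDa tNa; have /(theory_orP pt) [ta|//] := theory_prov_imp pt (prov_dia_unfold a) tDa.
    by rewrite ta in tNa.
  + by apply: contra; apply: (theory_prov_imp pt (prov_next_dia a)).
Qed.

Lemma weak_quasimodel_restrict (Sig : pred form) (W : Type) (le S : W -> W -> Prop)
    (l : W -> ty) (P : W -> Prop) :
  weak_quasimodel Sig le S l -> (forall u v, P u -> le u v -> P v) ->
  weak_quasimodel Sig (fun x y : {w | P w} => le (sval x) (sval y))
    (fun x y => S (sval x) (sval y)) (fun x => l (sval x)).
Proof.
move=> [[[le_refl le_trans le_anti] l_type l_mono l_imp] S_fc S_sens] P_up.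
split; first split.
- split=> [//|x y z|[u pu] [v pv] /= luv lvu]; first exact: le_trans.
  by apply: eq_exist; apply: le_anti.
- by move=> x; apply: l_type.
- by move=> x y; apply: l_mono.
- move=> [w pw] a b /= /l_imp [v [lwv lv]].
  by exists (exist _ v (P_up _ _ pw lwv)).
- move=> [w pw] [w' pw'] [v pv] /= lww' Swv.
  have [v' [lvv' Sw'v']] := S_fc _ _ _ lww' Swv.
  by exists (exist _ v' (P_up _ _ pv lvv')).
- by move=> x y; apply: S_sens.
Qed.

Lemma iterS_restrict (W : Type) (S : W -> W -> Prop) (P : W -> Prop) n u v (pu : P u) :
  Defs.iterS (fun x y => S x y /\ P y) n u v ->
  exists pv : P v, Defs.iterS (fun x y : {w | P w} => S (sval x) (sval y)) n
                         (exist _ u pu) (exist _ v pv).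
Proof.
elim: n u pu => [|n IHn] u pu /=; first by move=> uv; subst v; exists pu.
move=> [u' [[Suu' pu'] u'v]]; have [pv u'v'] := IHn _ pu' u'v.
by exists pv; exists (exist _ u' pu').
Qed.

(** * The points with an unprovable Sim *)

Lemma type_mem_plus (Sig : pred form) T f : is_type Sig T -> tplus T f -> Sig f.
Proof. by move=> [_ [SigT _]] Tf; apply/SigT; right. Qed.

Lemma type_mem_minus (Sig : pred form) T f : is_type Sig T -> tminus T f -> Sig f.
Proof. by move=> [_ [SigT _]] Tf; apply/SigT; left. Qed.

Section SimPoints.
Variables (Sig : seq form) (W : finType) (leI SI : rel W) (lI : W -> ty).
Hypothesis HI :
  weak_quasimodel (fun f => f \in Sig) (fun x y => leI x y) (fun x y => SI x y) lI.

Local Notation R := (simulates (fun x y => leI x y) lI canon_le canon_label).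
Hypothesis R_sim : simulation (fun x y => leI x y) lI canon_le canon_label R.
Hypothesis R_dyn : dynamic (fun x y => SI x y) canon_S R.

Definition Sim (u : W) : form := sim_formula Sig leI lI u.
Definition unprovable_Sim (u : W) : Prop := ~ prov (Sim u).
Definition strictly_above (u : W) : pred W := [pred v | (v != u) && leI u v].

Lemma leI_trans u v w : leI u v -> leI v w -> leI u w.
Proof. by case: HI => [[[_ le_trans _] _ _ _] _ _]; apply: le_trans. Qed.

Lemma leI_anti u v : leI u v -> leI v u -> u = v.
Proof. by case: HI => [[[_ _ le_anti] _ _ _] _ _]; apply: le_anti. Qed.

Lemma lI_type u : is_type (fun f => f \in Sig) (lI u).
Proof. by case: HI => [[_ l_type _ _] _ _]. Qed.

Lemma card_strictly_above u : #|strictly_above u| < #|W|.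
Proof.
have W_pos : 0 < #|W| by apply/card_gt0P; exists u.
rewrite -(prednK W_pos) ltnS -(cardC1 u).
by apply: subset_leq_card; apply/subsetP => v; rewrite !inE => /andP [].
Qed.

Lemma card_strictly_above_lt u v :
  v != u -> leI u v -> #|strictly_above v| < #|strictly_above u|.
Proof.
move=> vNu luv; apply: proper_card; apply/properP; split.
- apply/subsetP => x; rewrite !inE => /andP [xNv lvx]; rewrite (leI_trans luv lvx) andbT.
  by apply: contra_neq vNu => xu; subst x; apply: leI_anti.
- by exists v; rewrite !inE ?vNu ?luv ?eqxx.
Qed.

Lemma simf_fuel k k' u : #|strictly_above u| < k -> #|strictly_above u| < k' ->
  simf Sig leI lI k u = simf Sig leI lI k' u.
Proof.
elim: k k' u => [//|k IHk] [//|k'] u uk uk' /=; congr (Imp _ (Or _ (bigOr _))).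
apply/eq_in_map => v; rewrite mem_enum inE => /andP [vNu luv].
have uv := card_strictly_above_lt vNu luv.
by apply: IHk; apply: leq_trans uv _; rewrite -ltnS.
Qed.

Lemma simulation_refutes_simf E :
  simulation (fun x y => leI x y) lI canon_le canon_label E ->
  forall k u x, E u x -> ~~ sval x (simf Sig leI lI k u).
Proof.
move=> [E_sub E_fc]; elim=> [|k IHk] u x Eux; first exact: theory_consistent (svalP x).
have pt := svalP x; have [lmin lplus] := E_sub _ _ Eux.
apply/negP => /= xImp.
have xAnd : sval x (bigAnd [seq f <- Sig | tplus (lI u) f]).
  by apply/(theory_bigAndP pt) => f; rewrite mem_filter => /andP [/lplus].
move: (theory_mp pt xImp xAnd) => /(theory_orP pt) [/(theory_bigOrP pt) [f]|/(theory_bigOrP pt) [f]].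
- by rewrite mem_filter => /andP [/lmin /= /negP].
- move=> /mapP [v]; rewrite mem_enum inE => /andP [_ luv] -> xv.
  have [y [lxy Evy]] := E_fc _ _ _ Eux luv.
  by move: (IHk _ _ Evy); rewrite (lxy _ xv).
Qed.

Lemma simulates_refutes u x : R u x -> ~~ sval x (Sim u).
Proof. by move=> [E [simE Eux]]; apply: simulation_refutes_simf simE _ _ _ Eux. Qed.

Lemma simulates_unprovable u x : R u x -> unprovable_Sim u.
Proof. by move=> /simulates_refutes uNx /(theory_prov (svalP x)); apply/negP. Qed.

Definition realises (u : W) (x : ptheory) : Prop :=
  [/\ forall f, tplus (lI u) f -> sval x f,
      forall f, tminus (lI u) f -> ~~ sval x f
    & forall v, v \in strictly_above u -> ~~ sval x (Sim v)].

Lemma refutes_extend_realises u x :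
  ~~ sval x (Sim u) -> exists y, canon_le x y /\ realises u y.
Proof.
have pt := svalP x; have W_pos : 0 < #|W| by apply/card_gt0P; exists u.
rewrite /Sim /sim_formula -(prednK W_pos) /= => xNSim.
have [t [pt' xt t_and tNor]] := theory_extend_imp pt xNSim.
exists (exist _ t pt'); split=> //; split=> /= [f uf|f uf|v].
- apply: ((theory_bigAndP pt' _).1 t_and).
  by rewrite mem_filter uf (type_mem_plus (lI_type u) uf).
- apply: contraNN tNor => tf; apply/(theory_orP pt'); left.
  apply/(theory_bigOrP pt'); exists f => //.
  by rewrite mem_filter uf (type_mem_minus (lI_type u) uf).
- rewrite inE => /andP [vNu luv]; apply: contraNN tNor => tSimv.
  apply/(theory_orP pt'); right; apply/(theory_bigOrP pt').
  exists (simf Sig leI lI #|W|.-1 v); first by apply: map_f; rewrite mem_enum inE vNu.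
  have vW : #|strictly_above v| < #|W|.-1.
    rewrite -ltnS prednK //.
    exact: leq_ltn_trans (card_strictly_above_lt vNu luv) (card_strictly_above u).
  by rewrite (simf_fuel vW (card_strictly_above v)).
Qed.

Lemma realises_simulation : simulation (fun x y => leI x y) lI canon_le canon_label realises.
Proof.
split=> [u x [uplus umin _]|u u' x ux luu'].
  by split=> f /=; [apply: umin|apply: uplus].
have [->|u'Nu] := eqVneq u' u; first by exists x; split=> // f.
by apply: refutes_extend_realises; case: ux => _ _; apply; rewrite inE u'Nu.
Qed.

Lemma refutes_extend_simulates u x :
  ~~ sval x (Sim u) -> exists y, canon_le x y /\ R u y.
Proof.
move=> /refutes_extend_realises [y [lxy uy]].
by exists y; split=> //; exists realises; split=> //; apply: realises_simulation.
Qed.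

Lemma unprovable_simulates u : unprovable_Sim u -> exists x, R u x.
Proof.
move=> uP; have [|t [pt _ tNSim]] := @lindenbaum (fun _ => False) (Sim u).
  by move/entails_prov0.
by have [y [_ Ruy]] := @refutes_extend_simulates u (exist _ t pt) tNSim; exists y.
Qed.

Lemma unprovable_Sim_up u v : unprovable_Sim u -> leI u v -> unprovable_Sim v.
Proof.
move=> /unprovable_simulates [x Rux] luv; case: R_sim => _ R_fc.
by have [y [_ Rvy]] := R_fc _ _ _ Rux luv; apply: simulates_unprovable Rvy.
Qed.

Local Notation WP := {w : W | unprovable_Sim w}.
Local Notation SP := (fun x y : WP => SI (sval x) (sval y)).

Lemma unprovable_Sim_serial : serial SP.
Proof.
move=> [w pw]; have [x Rwx] := unprovable_simulates pw.
have [w' [Sww' Rw'x']] := R_dyn Rwx (erefl (canon_next x)).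
by exists (exist _ w' (simulates_unprovable Rw'x')).
Qed.

Local Notation SIP := (fun x y => SI x y /\ unprovable_Sim y).

Definition avoids (a : form) (u : W) : Prop :=
  forall n v, Defs.iterS SIP n u v -> tminus (lI v) a.

Definition avoid_formula (a : form) : form :=
  bigAnd [seq Sim u | u <- enum W & `[< avoids a u >]].

Lemma theory_avoid_formulaP t a : prime_theory t ->
  t (avoid_formula a) <-> forall u, avoids a u -> t (Sim u).
Proof.
move=> pt; rewrite (theory_bigAndP pt); split=> [tchi u au|tSim f].
  by apply: tchi; apply: map_f; rewrite mem_filter mem_enum andbT; apply/asboolP.
by move=> /mapP [u]; rewrite mem_filter mem_enum andbT => /asboolP au ->; apply: tSim.
Qed.

Lemma prov_imp_avoid_formula a : prov (Imp a (avoid_formula a)).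
Proof.
apply: prov_imp_complete => t pt ta; apply/(theory_avoid_formulaP a pt) => u au.
apply: contraT => tNSim.
have [y [lty [E [[E_sub _] Euy]]]] := @refutes_extend_simulates u (exist _ t pt) tNSim.
by have /= := (E_sub _ _ Euy).1 a (au 0 u erefl); rewrite (lty _ ta).
Qed.

Lemma prov_next_avoid_formula a : prov (Imp (Next (avoid_formula a)) (avoid_formula a)).
Proof.
apply: prov_imp_complete => t pt tNchi; apply/(theory_avoid_formulaP a pt) => u au.
apply: contraT => tNSim.
have [y [lty Ruy]] := @refutes_extend_simulates u (exist _ t pt) tNSim.
have [u' [Suu' Ru'y']] := R_dyn Ruy (erefl (canon_next y)).
have au' : avoids a u'.
  move=> n v u'v; apply: (au n.+1); exists u'; split=> //.
  by split=> //; apply: simulates_unprovable Ru'y'.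
have /(theory_avoid_formulaP a (svalP (canon_next y))) := lty _ tNchi.
by move=> /(_ u' au') y'Sim; move: (simulates_refutes Ru'y'); rewrite y'Sim.
Qed.

Lemma prov_dia_avoid_formula a : prov (Imp (Dia a) (avoid_formula a)).
Proof.
apply: prov_imp_complete => t pt tDa.
apply: (theory_prov_imp pt (r_diaInd (prov_next_avoid_formula a))).
exact: (theory_prov_imp pt (r_diaMon (prov_imp_avoid_formula a)) tDa).
Qed.

Lemma unprovable_Sim_not_avoids u a :
  unprovable_Sim u -> tplus (lI u) (Dia a) -> ~ avoids a u.
Proof.
move=> /unprovable_simulates [x Rux] uDa au; have pt := svalP x.
have xDa : sval x (Dia a).
  by case: Rux => [E [[E_sub _] Eux]]; apply: (E_sub _ _ Eux).2.
have := theory_prov_imp pt (prov_dia_avoid_formula a) xDa.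
move=> /(theory_avoid_formulaP a pt) /(_ u au).
by apply/negP; apply: simulates_refutes Rux.
Qed.

Hypothesis Sig_closed : subformula_closed Sig.

Lemma unprovable_Sim_omega_sensible : omega_sensible SP (fun x : WP => lI (sval x)).
Proof.
move=> [w pw] a /= wDa.
have aSig : a \in Sig by apply: Sig_closed (type_mem_plus (lI_type w) wDa) _ _; rewrite inE.
have [n [v [wv vNa]]] : exists n v, Defs.iterS SIP n w v /\ ~ tminus (lI v) a.
  apply: contrapT => noPath; apply: (unprovable_Sim_not_avoids pw wDa) => n v wv.
  by apply: contrapT => vNa; apply: noPath; exists n, v.
have [pv wv'] := iterS_restrict pw wv.
exists n, (exist _ v pv); split=> //=.
by have [_ [/(_ a) [/(_ aSig) [|]]]] := lI_type v.
Qed.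

End SimPoints.

Theorem corollary7p4
  (Sig : seq form) (W : finType) (leI SI : rel W) (lI : W -> ty) :
  subformula_closed Sig ->
  weak_quasimodel (fun f => f \in Sig) (fun x y => leI x y) (fun x y => SI x y) lI ->
  (forall (A : Type) (leA SA : A -> A -> Prop) (lA : A -> ty),
     weak_quasimodel (fun _ => true) leA SA lA -> deterministic SA ->
     let R := simulates (fun x y => leI x y) lI leA lA in
     [/\ simulation (fun x y => leI x y) lI leA lA R,
         dynamic (fun x y => SI x y) SA R
       & surjective_rel R]) ->
  quasimodel (fun f => f \in Sig)
    (W := {w : W | ~ prov (sim_formula Sig leI lI w)})
    (fun x y => leI (sval x) (sval y))
    (fun x y => SI (sval x) (sval y))
    (fun x => lI (sval x)).
Proof.
move=> Sig_closed HI simI.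
have [R_sim R_dyn _] := simI _ _ _ _ canon_weak_quasimodel canon_deterministic.
split.
- apply: (weak_quasimodel_restrict HI).
  exact: unprovable_Sim_up HI R_sim.
- exact: (unprovable_Sim_serial HI R_dyn).
- exact: (unprovable_Sim_omega_sensible HI R_dyn Sig_closed).
Qed.
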